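(* Let $z\in\mathbb{R}_{\ge0}^s$ with $\sum_j z_j>0$ and $\eta>0$, let $S=\{j: z_j>0\}$, and for $j\in S$ let $g_j=\frac{1}{(\sum_l z_l)^2}\sum_k z_k\log\frac{z_k}{z_j}$. Let $\tilde z_j=\max(z_j-\eta g_j,0)$ for $j\in S$ and $\tilde z_j=0$ for $j\notin S$. Suppose that a smallest non-zero entry $z_{i_0}$ of $z$ satisfies $\tilde z_{i_0}>0$. Then for every $i\in S$, $$\frac{\tilde z_i}{\sum_j\tilde z_j}-\frac{z_i}{\sum_j z_j}=\frac{z_i-\eta g_i}{\sum_{j\in S}(z_j-\eta g_j)}-\frac{z_i}{\sum_j z_j}=\frac{\eta}{c}\Big[z_i\sum_{j\in S}g_j-\Big(\sum_j z_j\Big)g_i\Big],$$ where $c=\big(\sum_j z_j\big)\big(\sum_{j\in S}(z_j-\eta g_j)\big)>0$ does not depend on $i$.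
   Context: $g_j$ is the partial derivative with respect to $z_j$ of the entropy $\mathcal{H}(z)=-\sum_i \frac{z_i}{\sum_l z_l}\log\frac{z_i}{\sum_l z_l}$ (convention $0\log0=0$, so terms with $z_k=0$ contribute $0$). *)

From mathcomp Require Import all_boot all_order all_algebra.
From mathcomp Require Import all_classical all_reals all_analysis.
Set Implicit Arguments. Unset Strict Implicit. Unset Printing Implicit Defensive.
Import Order.TTheory GRing.Theory Num.Theory.
Local Open Scope ring_scope.

(* g_j = (1/(sum_l z_l)^2) * sum_k z_k log(z_k/z_j); terms with z_k = 0 vanish
   (0 * _ = 0), matching the convention 0 log 0 = 0. Used only for j in S. *)
Definition ent_grad (R : realType) (s : nat) (z : 'I_s -> R) (j : 'I_s) : R :=
  (\sum_(l < s) z l) ^- 2 * \sum_(k < s) z k * ln (z k / z j).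

Definition ztilde (R : realType) (s : nat) (eta : R) (z : 'I_s -> R) (j : 'I_s) : R :=
  if 0 < z j then Num.max (z j - eta * ent_grad z j) 0 else 0.

From mathcomp Require Import all_boot all_order all_algebra.
From mathcomp Require Import all_classical all_reals all_analysis.
From mathcomp Require Import ring.
Set Implicit Arguments. Unset Strict Implicit. Unset Printing Implicit Defensive.
Import Order.TTheory GRing.Theory Num.Theory.
Local Open Scope ring_scope.

(* Since g_j = (sum_k z_k ln z_k - Z ln z_j) / Z^2 decreases in z_j, the step
   z_j - eta g_j increases in z_j; so if it is positive at a smallest non-zero
   entry, it is positive on the whole support S. Then the truncation in
   ztilde is inactive, the normaliser of ztilde is D = Z - eta sum_S g_j > 0,
   and the identity is a rational-function computation. *)

Lemma sumr_pos_support (R : numDomainType) (I : finType) (F : I -> R) :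
  (forall i, 0 <= F i) -> \sum_(i | 0 < F i) F i = \sum_i F i.
Proof.
move=> F_ge0; rewrite big_mkcond /=; apply: eq_bigr => i _.
by case: ifP => // /negbT; rewrite lt0r F_ge0 andbT negbK => /eqP.
Qed.

Lemma ratio_step_subE (F : fieldType) (Z G x g eta : F) :
  Z != 0 -> Z - eta * G != 0 ->
  (x - eta * g) / (Z - eta * G) - x / Z
    = eta / (Z * (Z - eta * G)) * (x * G - Z * g).
Proof. by move=> Z_neq0 D_neq0; field; apply/andP. Qed.

Section EntropyGradientStep.

Variables (R : realType) (s : nat) (z : 'I_s -> R).
Hypothesis z_ge0 : forall j, 0 <= z j.

Lemma ent_gradE j : 0 < z j ->
  ent_grad z j = (\sum_(l < s) z l) ^- 2 *
    (\sum_(k < s) z k * ln (z k) - (\sum_(k < s) z k) * ln (z j)).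
Proof.
move=> zj_gt0; rewrite /ent_grad; congr (_ * _).
rewrite mulr_suml -sumrB; apply: eq_bigr => k _.
have := z_ge0 k; rewrite le_eqVlt => /orP[/eqP <-|zk_gt0]; first by rewrite !mul0r subr0.
by rewrite ln_div ?posrE // mulrBr.
Qed.

Lemma ent_grad_le i j : 0 < z i -> z i <= z j -> ent_grad z j <= ent_grad z i.
Proof.
move=> zi_gt0 zij; have zj_gt0 := lt_le_trans zi_gt0 zij.
have Z_ge0 : 0 <= \sum_(l < s) z l by exact: sumr_ge0.
rewrite !ent_gradE // ler_wpM2l ?invr_ge0 ?exprn_ge0 // lerB //.
by rewrite ler_wpM2l // ler_ln ?posrE.
Qed.

Lemma ent_step_le eta i j : 0 <= eta -> 0 < z i -> z i <= z j ->
  z i - eta * ent_grad z i <= z j - eta * ent_grad z j.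
Proof. by move=> eta_ge0 zi_gt0 zij; rewrite lerD // lerN2 ler_wpM2l // ent_grad_le. Qed.

Lemma sum_ent_stepE eta :
  \sum_(j < s | 0 < z j) (z j - eta * ent_grad z j)
    = \sum_(j < s) z j - eta * \sum_(j < s | 0 < z j) ent_grad z j.
Proof. by rewrite sumrB sumr_pos_support // mulr_sumr. Qed.

Variables (eta : R) (i0 : 'I_s).
Hypotheses (eta_ge0 : 0 <= eta) (zi0_gt0 : 0 < z i0).
Hypothesis zi0_min : forall j, 0 < z j -> z i0 <= z j.
Hypothesis ztilde_i0_gt0 : 0 < ztilde eta z i0.

Lemma ent_step_gt0 j : 0 < z j -> 0 < z j - eta * ent_grad z j.
Proof.
move=> zj_gt0; apply: lt_le_trans _ (ent_step_le eta_ge0 zi0_gt0 (zi0_min zj_gt0)).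
by move: ztilde_i0_gt0; rewrite /ztilde zi0_gt0 lt_max ltxx orbF.
Qed.

Lemma ztildeE j : 0 < z j -> ztilde eta z j = z j - eta * ent_grad z j.
Proof. by move=> zj_gt0; rewrite /ztilde zj_gt0 max_l // ltW // ent_step_gt0. Qed.

Lemma sum_ztildeE :
  \sum_(j < s) ztilde eta z j = \sum_(j < s | 0 < z j) (z j - eta * ent_grad z j).
Proof.
rewrite [RHS]big_mkcond /=; apply: eq_bigr => j _.
by case: ifP => [/ztildeE //|zj_le0]; rewrite /ztilde zj_le0.
Qed.

Lemma sum_ent_step_gt0 : 0 < \sum_(j < s | 0 < z j) (z j - eta * ent_grad z j).
Proof.
rewrite (bigD1 i0) //=; apply: ltr_pwDl; first exact: ent_step_gt0.
by apply: sumr_ge0 => j /andP[zj_gt0 _]; exact/ltW/ent_step_gt0.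
Qed.

End EntropyGradientStep.

Theorem corollary9 (R : realType) (s : nat) (z : 'I_s -> R) (eta : R)
  (hz : forall j, 0 <= z j) (hsum : 0 < \sum_(j < s) z j) (heta : 0 < eta)
  (hmin : exists i0 : 'I_s, [/\ 0 < z i0,
            (forall j, 0 < z j -> z i0 <= z j) & 0 < ztilde eta z i0]) :
  let Z := \sum_(j < s) z j in
  let D := \sum_(j < s | 0 < z j) (z j - eta * ent_grad z j) in
  let c := Z * D in
  0 < c /\
  forall i : 'I_s, 0 < z i ->
    ztilde eta z i / (\sum_(j < s) ztilde eta z j) - z i / Z
      = (z i - eta * ent_grad z i) / D - z i / Z /\
    (z i - eta * ent_grad z i) / D - z i / Z
      = eta / c * (z i * (\sum_(j < s | 0 < z j) ent_grad z j) - Z * ent_grad z i).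
Proof.
move=> Z D c; case: hmin => i0 [zi0_gt0 zi0_min ztilde_i0_gt0].
have D_gt0 : 0 < D := sum_ent_step_gt0 hz (ltW heta) zi0_gt0 zi0_min ztilde_i0_gt0.
have DE : D = Z - eta * \sum_(j < s | 0 < z j) ent_grad z j := sum_ent_stepE hz eta.
split; first exact: mulr_gt0.
move=> i zi_gt0; split.
  rewrite (sum_ztildeE hz (ltW heta) zi0_gt0 zi0_min ztilde_i0_gt0).
  by rewrite (ztildeE hz (ltW heta) zi0_gt0 zi0_min ztilde_i0_gt0 zi_gt0).
by rewrite /c DE ratio_step_subE // ?lt0r_neq0 // -DE.
Qed.
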